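(* Let $\mathbb{V}$ and $\mathbb{V}'$ be varieties with signatures $\mathcal{F}\subseteq\mathcal{F}'$ and defining sets of identities $\Sigma\subseteq\Sigma'$ respectively, and suppose $\mathbb{V}$ is BIT speciale with terms $0,\alpha_1,\dots,\alpha_n,\theta$. Let $T$ be any set of ideal terms determining ideals in $\mathbb{V}$. (a) The union of $T$ with the set of terms $$\alpha_i\big(\tau(\theta(y_{11},\dots,y_{1n},x_1),\dots,\theta(y_{k1},\dots,y_{kn},x_k)),\ \tau(x_1,\dots,x_k)\big),$$ for all $\tau\in\mathcal{F}'\setminus\mathcal{F}$ (of arity $k$) and all $1\le i\le n$, determines ideals in $\mathbb{V}'$. (b) The union of $T$ with the set of terms $$\alpha_i\big(\tau(x_1,\dots,x_{j-1},\theta(y_1,\dots,y_n,x_j),x_{j+1},\dots,x_k),\ \tau(x_1,\dots,x_k)\big),$$ for all $\tau\in\mathcal{F}'\setminus\mathcal{F}$ (of arity $k$) and all $1\le i\le n$, $1\le j\le k$, determines ideals in $\mathbb{V}'$. (In the displayed terms the $y$-variables are the ideal variables and the $x$-variables are parameters.)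
   Context: BIT speciale: the algebraic theory contains a constant $0$ and, for some $n\ge1$, binary terms $\alpha_1,\dots,\alpha_n$ and an $(n+1)$-ary term $\theta$ such that $\alpha_i(x,x)=0$ and $\theta(\alpha_1(x,y),\dots,\alpha_n(x,y),y)=x$ are identities; $\mathbb{V}'$ is then BIT speciale with the same terms. For a variety $\mathbb{W}$ with signature $\mathcal{G}$: an ideal term of $\mathbb{W}$ in the variables $y_1,\dots,y_p$ is a term $t(x_1,\dots,x_m,y_1,\dots,y_p)$ over $\mathcal{G}$ with $t(x_1,\dots,x_m,0,\dots,0)=0$ an identity of $\mathbb{W}$; a non-empty subset $H$ of a $\mathbb{W}$-algebra $A$ is an ideal if $t(a_1,\dots,a_m,b_1,\dots,b_p)\in H$ for every ideal term $t$, all $a_r\in A$, $b_s\in H$. A set $T$ of ideal terms determines ideals in $\mathbb{W}$ if for every $\mathbb{W}$-algebra $A$, a non-empty $H\subseteq A$ is an ideal iff every $t\in T$ takes values in $H$ whenever its $x$-variables are assigned elements of $A$ and its $y$-variables elements of $H$. *)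

From mathcomp Require Import all_boot.
Set Implicit Arguments. Unset Strict Implicit. Unset Printing Implicit Defensive.

Record sig := Sig { op : Type; ar : op -> nat }.

Definition subsig (s : sig) (P : op s -> Prop) : sig :=
  @Sig {f : op s | P f} (fun f => ar (proj1_sig f)).

Inductive term (s : sig) (X : Type) : Type :=
  | Var : X -> term s X
  | App : forall f : op s, ('I_(ar f) -> term s X) -> term s X.
Arguments Var {s X} _.
Arguments App {s X} f _.

Record algebra (s : sig) := Algebra {
  carrier :> Type;
  interp : forall f : op s, ('I_(ar f) -> carrier) -> carrier }.

Fixpoint eval (s : sig) (A : algebra s) (X : Type) (v : X -> A) (t : term s X) : A :=
  match t with
  | Var x => v x
  | App f a => @interp s A f (fun i => @eval s A X v (a i))
  end.
Arguments eval {s} A {X} v t.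

Fixpoint subst (s : sig) (X Y : Type) (sg : X -> term s Y) (t : term s X) : term s Y :=
  match t with
  | Var x => sg x
  | App f a => App f (fun i => subst sg (a i))
  end.

Fixpoint incl (s : sig) (P : op s -> Prop) (X : Type) (t : term (subsig P) X) : term s X :=
  match t with
  | Var x => Var x
  | App f a => @App s X (proj1_sig f) (fun i => incl (a i))
  end.

Definition identity (s : sig) := (term s nat * term s nat)%type.

Definition is_model (s : sig) (Sigma : identity s -> Prop) (A : algebra s) : Prop :=
  forall e, Sigma e -> forall v : nat -> A, eval A v e.1 = eval A v e.2.

Definition zval (s : sig) (A : algebra s) (z : term s void) : A :=
  eval A (fun v : void => match v with end) z.

Definition env2 (A : Type) (x y : A) : 'I_2 -> A :=
  fun b => if val b == 0 then x else y.

Definition bit_speciale (s : sig) (Sigma : identity s -> Prop) (n : nat)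
    (z : term s void) (alpha : 'I_n -> term s 'I_2) (theta : term s 'I_n.+1) : Prop :=
  0 < n /\
  forall A : algebra s, is_model Sigma A ->
    (forall (i : 'I_n) (x : A), eval A (env2 x x) (alpha i) = zval A z) /\
    (forall x y : A,
       eval A (fun k : 'I_n.+1 => match unlift ord_max k with
                                  | Some l => eval A (env2 x y) (alpha l)
                                  | None => y end) theta = x).

(* Terms in variables x_k (inl k, parameters) and y_k (inr k, ideal variables). *)
Definition ienv (A : Type) (a b : nat -> A) : nat + nat -> A :=
  fun v => match v with inl k => a k | inr k => b k end.

Definition ideal_term (s : sig) (Sigma : identity s -> Prop) (z : term s void)
    (t : term s (nat + nat)) : Prop :=
  forall A : algebra s, is_model Sigma A ->
    forall a : nat -> A, eval A (ienv a (fun _ => zval A z)) t = zval A z.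

Definition is_ideal (s : sig) (Sigma : identity s -> Prop) (z : term s void)
    (A : algebra s) (H : A -> Prop) : Prop :=
  (exists h, H h) /\
  forall t, ideal_term Sigma z t ->
    forall a b : nat -> A, (forall k, H (b k)) -> H (eval A (ienv a b) t).

Arguments is_ideal {s} Sigma z A H.

Definition determines_ideals (s : sig) (Sigma : identity s -> Prop) (z : term s void)
    (T : term s (nat + nat) -> Prop) : Prop :=
  (forall t, T t -> ideal_term Sigma z t) /\
  forall A : algebra s, is_model Sigma A ->
    forall H : A -> Prop, (exists h, H h) ->
      (is_ideal Sigma z A H <->
       forall t, T t -> forall a b : nat -> A, (forall k, H (b k)) -> H (eval A (ienv a b) t)).

Section NewTerms.
Local Unset Implicit Arguments.
Variables (s : sig) (P : op s -> Prop) (n : nat).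
Variables (alpha : 'I_n -> term (subsig P) 'I_2) (theta : term (subsig P) 'I_n.+1).

(* theta(y_{l_1},...,y_{l_n}, x_j) with y-variable indices given by yidx *)
Definition theta_at (yidx : 'I_n -> nat) (j : nat) : term s (nat + nat) :=
  subst (fun k : 'I_n.+1 => match unlift ord_max k with
                           | Some l => Var (inr (yidx l))
                           | None => Var (inl j) end) (incl theta).

Definition alpha_app (i : 'I_n) (u v : term s (nat + nat)) : term s (nat + nat) :=
  subst (fun b : 'I_2 => if val b == 0 then u else v) (incl (alpha i)).

Definition tau_x (tau : op s) : term s (nat + nat) :=
  App tau (fun j => Var (inl (val j))).

(* (a): alpha_i(tau(theta(y_{11..1n},x_1),...,theta(y_{k1..kn},x_k)), tau(x_1..x_k)),
   with y_{jl} encoded as inr (j*n + l). *)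
Definition term_a (tau : op s) (i : 'I_n) : term s (nat + nat) :=
  alpha_app i (App tau (fun j => theta_at (fun l => val j * n + val l) (val j))) (tau_x tau).

Definition term_b (tau : op s) (i : 'I_n) (j : 'I_(ar tau)) : term s (nat + nat) :=
  alpha_app i (App tau (fun j' => if j' == j then theta_at (fun l => val l) (val j)
                                  else Var (inl (val j')))) (tau_x tau).

Definition union_a (T : term (subsig P) (nat + nat) -> Prop) (t : term s (nat + nat)) : Prop :=
  (exists t0, T t0 /\ t = incl t0) \/
  (exists (tau : op s) (i : 'I_n), ~ P tau /\ t = term_a tau i).

Definition union_b (T : term (subsig P) (nat + nat) -> Prop) (t : term s (nat + nat)) : Prop :=
  (exists t0, T t0 /\ t = incl t0) \/
  (exists (tau : op s) (i : 'I_n) (j : 'I_(ar tau)), ~ P tau /\ t = term_b tau i j).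
End NewTerms.
Arguments union_a {s P n} alpha theta T t.
Arguments union_b {s P n} alpha theta T t.
Arguments term_a {s P n} alpha theta tau i.
Arguments term_b {s P n} alpha theta tau i j.

From mathcomp Require Import all_boot.
From Stdlib Require Import FunctionalExtensionality Classical.
Set Implicit Arguments. Unset Strict Implicit. Unset Printing Implicit Defensive.

(* For H a subset of an algebra of a BIT speciale variety, write x ~ y when
   alpha_i(x, y) is in H for every i.  When H is an ideal, the identities
   alpha_i(x, x) = 0 and theta(alpha(x, y), y) = x turn reflexivity,
   transitivity and compatibility of ~ with each operation, as well as
   H = {x | x ~ 0}, into closure of H under suitable ideal terms.  Conversely,
   if H contains 0, H = {x | x ~ 0} and ~ is compatible with all operations,
   then t(a, b) ~ t(a, 0) = 0 for every ideal term t and b in H, so H is an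
   ideal.  For an algebra of V' closed under the given terms, H is an ideal of
   its V-reduct, which yields everything except compatibility of ~ with the
   new operations tau; closure under the terms of (a) says exactly that, and
   closure under the terms of (b) says it one argument at a time, which
   transitivity assembles. *)

Lemma eval_subst (s : sig) (A : algebra s) (X Y : Type) (v : Y -> A)
    (sg : X -> term s Y) (t : term s X) :
  eval A v (subst sg t) = eval A (fun x => eval A v (sg x)) t.
Proof.
elim: t => [x|f a IH] //=; f_equal.
by apply: functional_extensionality => i; exact: IH.
Qed.

Definition thenv (A : Type) (n : nat) (ys : 'I_n -> A) (x : A) : 'I_n.+1 -> A :=
  fun k => if unlift ord_max k is Some l then ys l else x.

Section TermConstructors.
Variables (s : sig) (X : Type).

Definition const_term (z : term s void) : term s X :=
  subst (fun v : void => match v with end) z.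

Definition app2 (t : term s 'I_2) (u w : term s X) : term s X := subst (env2 u w) t.

Definition app_theta (n : nat) (th : term s 'I_n.+1) (ys : 'I_n -> term s X)
    (x : term s X) : term s X :=
  subst (thenv ys x) th.

Lemma eval_const_term (A : algebra s) (v : X -> A) (z : term s void) :
  eval A v (const_term z) = zval A z.
Proof.
by rewrite eval_subst /zval; congr eval; apply: functional_extensionality; case.
Qed.

Lemma eval_app2 (A : algebra s) (v : X -> A) (t : term s 'I_2) (u w : term s X) :
  eval A v (app2 t u w) = eval A (env2 (eval A v u) (eval A v w)) t.
Proof.
rewrite eval_subst; congr eval; apply: functional_extensionality => b.
by rewrite /env2; case: ifP.
Qed.

Lemma eval_app_theta (A : algebra s) (v : X -> A) (n : nat) (th : term s 'I_n.+1)
    (ys : 'I_n -> term s X) (x : term s X) :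
  eval A v (app_theta th ys x) = eval A (thenv (fun l => eval A v (ys l)) (eval A v x)) th.
Proof.
rewrite eval_subst; congr eval; apply: functional_extensionality => k.
by rewrite /thenv; case: unlift.
Qed.

End TermConstructors.
Arguments const_term {s X} z.

Section CompatTerms.
Variables (s : sig) (n : nat) (al : 'I_n -> term s 'I_2) (th : term s 'I_n.+1).

Definition compat_term (tau : op s) (i : 'I_n) : term s (nat + nat) :=
  app2 (al i)
    (App tau (fun j => app_theta th (fun l => Var (inr (val j * n + val l))) (Var (inl (val j)))))
    (App tau (fun j => Var (inl (val j)))).

Definition compat_term_at (tau : op s) (i : 'I_n) (j : 'I_(ar tau)) : term s (nat + nat) :=
  app2 (al i)
    (App tau (fun j' => if j' == j
                        then app_theta th (fun l => Var (inr (val l))) (Var (inl (val j)))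
                        else Var (inl (val j'))))
    (App tau (fun j' => Var (inl (val j')))).
Arguments compat_term_at : clear implicits.

Lemma eval_compat_term (A : algebra s) (a b : nat -> A) tau i :
  eval A (ienv a b) (compat_term tau i) =
  eval A (env2
    (@interp _ A tau (fun j => eval A (thenv (fun l => b (val j * n + val l)) (a (val j))) th))
    (@interp _ A tau (fun j => a (val j)))) (al i).
Proof.
rewrite eval_app2 /=; do 3 f_equal; apply: functional_extensionality => j.
exact: eval_app_theta.
Qed.

Lemma eval_compat_term_at (A : algebra s) (a b : nat -> A) tau i j :
  eval A (ienv a b) (compat_term_at tau i j) =
  eval A (env2
    (@interp _ A tau (fun j' => if j' == j then eval A (thenv (fun l => b (val l)) (a (val j))) th
                                else a (val j')))
    (@interp _ A tau (fun j' => a (val j')))) (al i).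
Proof.
rewrite eval_app2 /=; do 3 f_equal; apply: functional_extensionality => j'.
by case: ifP => _ //; exact: eval_app_theta.
Qed.

End CompatTerms.
Arguments compat_term_at {s n} al th tau i j.

Definition ord_extend (A : Type) (m : nat) (f : 'I_m -> A) (d : A) (k : nat) : A :=
  if insub k is Some j then f j else d.

Definition ord_extend2 (A : Type) (m n : nat) (f : 'I_m -> 'I_n -> A) (d : A) (k : nat) : A :=
  ord_extend (fun j => ord_extend (f j) d (k %% n)) d (k %/ n).

Lemma ord_extendE (A : Type) m (f : 'I_m -> A) d (j : 'I_m) : ord_extend f d (val j) = f j.
Proof. by rewrite /ord_extend valK. Qed.

Lemma ord_extend2E (A : Type) m n (f : 'I_m -> 'I_n -> A) d (j : 'I_m) (l : 'I_n) :
  ord_extend2 f d (val j * n + val l) = f j l.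
Proof.
have n_gt0 : 0 < n by apply: leq_ltn_trans (ltn_ord l).
rewrite /ord_extend2 divnMDl // modnMDl (divn_small (ltn_ord l)) (modn_small (ltn_ord l)).
by rewrite addn0 !ord_extendE.
Qed.

Lemma ord_extend_in (A : Type) (H : A -> Prop) m (f : 'I_m -> A) d :
  H d -> (forall j, H (f j)) -> forall k, H (ord_extend f d k).
Proof. by move=> Hd Hf k; rewrite /ord_extend; case: insub. Qed.

Lemma ord_extend2_in (A : Type) (H : A -> Prop) m n (f : 'I_m -> 'I_n -> A) d :
  H d -> (forall j l, H (f j l)) -> forall k, H (ord_extend2 f d k).
Proof. by move=> Hd Hf k; apply: ord_extend_in => // j; apply: ord_extend_in. Qed.

Definition bit_laws (s : sig) (A : algebra s) (n : nat) (z0 : A)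
    (al : 'I_n -> term s 'I_2) (th : term s 'I_n.+1) : Prop :=
  (forall i x, eval A (env2 x x) (al i) = z0) /\
  (forall x y, eval A (thenv (fun l => eval A (env2 x y) (al l)) y) th = x).
Arguments bit_laws {s} A {n} z0 al th.

Lemma bit_speciale_laws (s : sig) (Sigma : identity s -> Prop) (n : nat) (z : term s void)
    (al : 'I_n -> term s 'I_2) (th : term s 'I_n.+1) :
  bit_speciale Sigma z al th -> forall A, is_model Sigma A -> bit_laws A (zval A z) al th.
Proof. by case. Qed.

Definition alpha_rel (s : sig) (A : algebra s) (n : nat) (al : 'I_n -> term s 'I_2)
    (H : A -> Prop) (x y : A) : Prop :=
  forall i, H (eval A (env2 x y) (al i)).

Definition compatible (s : sig) (A : algebra s) (R : A -> A -> Prop) (f : op s) : Prop :=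
  forall u v : 'I_(ar f) -> A, (forall j, R (u j) (v j)) -> R (@interp _ A f u) (@interp _ A f v).

Lemma eval_rel (s : sig) (A : algebra s) (R : A -> A -> Prop) :
  (forall x, R x x) -> (forall f, compatible R f) ->
  forall t (a b b' : nat -> A), (forall k, R (b k) (b' k)) ->
  R (eval A (ienv a b) t) (eval A (ienv a b') t).
Proof.
move=> Rrefl Rcomp t a b b' Rb; elim: t => [[k|k]|f ts IH] //=.
exact: Rcomp.
Qed.

Section BitLaws.
Variables (s : sig) (A : algebra s) (n : nat) (z0 : A).
Variables (al : 'I_n -> term s 'I_2) (th : term s 'I_n.+1).
Hypothesis bitA : bit_laws A z0 al th.

Lemma eval_theta_zero y : eval A (thenv (fun _ => z0) y) th = y.
Proof.
rewrite -[RHS](bitA.2 y y); congr eval; congr thenv.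
by apply: functional_extensionality => l; rewrite bitA.1.
Qed.

Lemma eval_theta_alpha (x y : A) (b : nat -> A) (idx : 'I_n -> nat) :
  (forall l, b (idx l) = eval A (env2 x y) (al l)) ->
  eval A (thenv (fun l => b (idx l)) y) th = x.
Proof.
move=> Eb; rewrite -[RHS](bitA.2 x y); congr eval; congr thenv.
by apply: functional_extensionality.
Qed.

Lemma eval_compat_term_zero tau i a :
  eval A (ienv a (fun _ => z0)) (compat_term al th tau i) = z0.
Proof.
rewrite eval_compat_term -[RHS](bitA.1 i (@interp _ A tau (fun j => a (val j)))).
do 3 f_equal; apply: functional_extensionality => j; exact: eval_theta_zero.
Qed.

Lemma eval_compat_term_at_zero tau i j a :
  eval A (ienv a (fun _ => z0)) (compat_term_at al th tau i j) = z0.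
Proof.
rewrite eval_compat_term_at -[RHS](bitA.1 i (@interp _ A tau (fun j => a (val j)))).
do 3 f_equal; apply: functional_extensionality => j'.
by rewrite eval_theta_zero; case: eqP => [->|].
Qed.

Variable H : A -> Prop.
Hypothesis H0 : H z0.

Lemma alpha_rel_refl x : alpha_rel al H x x.
Proof. by move=> i; rewrite bitA.1. Qed.

Lemma compatible_of_compat_term tau :
  (forall i a b, (forall k, H (b k)) -> H (eval A (ienv a b) (compat_term al th tau i))) ->
  compatible (alpha_rel al H) tau.
Proof.
move=> Hcl u v Huv i.
pose b := ord_extend2 (fun j l => eval A (env2 (u j) (v j)) (al l)) z0.
have := Hcl i (ord_extend v z0) b (ord_extend2_in H0 Huv).
rewrite eval_compat_term; congr (H (eval A (env2 (@interp _ A tau _) (@interp _ A tau _)) _)).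
- apply: functional_extensionality => j; rewrite ord_extendE.
  by apply: eval_theta_alpha => l; rewrite /b ord_extend2E.
- by apply: functional_extensionality => j; rewrite ord_extendE.
Qed.

Lemma alpha_rel_interp_update tau (j : 'I_(ar tau)) :
  (forall i a b, (forall k, H (b k)) -> H (eval A (ienv a b) (compat_term_at al th tau i j))) ->
  forall (w : 'I_(ar tau) -> A) x, alpha_rel al H x (w j) ->
  alpha_rel al H (@interp _ A tau (fun j' => if j' == j then x else w j')) (@interp _ A tau w).
Proof.
move=> Hcl w x Hx i.
pose b := ord_extend (fun l => eval A (env2 x (w j)) (al l)) z0.
have := Hcl i (ord_extend w z0) b (ord_extend_in H0 Hx).
rewrite eval_compat_term_at; congr (H (eval A (env2 (@interp _ A tau _) (@interp _ A tau _)) _)).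
- apply: functional_extensionality => j'; rewrite !ord_extendE.
  case: eqP => // _.
  by apply: eval_theta_alpha => l; rewrite /b ord_extendE.
- by apply: functional_extensionality => j'; rewrite ord_extendE.
Qed.

Lemma compatible_of_compat_term_at tau :
  (forall x y w, alpha_rel al H x y -> alpha_rel al H y w -> alpha_rel al H x w) ->
  (forall i j a b, (forall k, H (b k)) -> H (eval A (ienv a b) (compat_term_at al th tau i j))) ->
  compatible (alpha_rel al H) tau.
Proof.
move=> Htrans Hcl u v Huv.
(* Replace the arguments v by u one position at a time. *)
pose w m (j : 'I_(ar tau)) := if val j < m then u j else v j.
have Hw m : m <= ar tau -> alpha_rel al H (@interp _ A tau (w m)) (@interp _ A tau v).
  elim: m => [_ | m IH lt_m].
    have -> : w 0 = v by apply: functional_extensionality.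
    exact: alpha_rel_refl.
  apply: Htrans (IH (ltnW lt_m)).
  pose jm := Ordinal lt_m.
  have -> : w m.+1 = fun j => if j == jm then u jm else w m j.
    apply: functional_extensionality => j; rewrite /w.
    case: eqP => [-> | ne]; first by rewrite ltnSn.
    rewrite ltnS leq_eqVlt; case: eqP => //= E; case: ne; exact: val_inj.
  apply: alpha_rel_interp_update; first by move=> i; apply: Hcl.
  by rewrite /w ltnn; exact: Huv.
suff -> : u = w (ar tau) by exact: Hw.
by apply: functional_extensionality => j; rewrite /w ltn_ord.
Qed.

End BitLaws.

Section BitSpecialeIdeals.
Variables (s : sig) (Sigma : identity s -> Prop) (n : nat) (z : term s void).
Variables (al : 'I_n -> term s 'I_2) (th : term s 'I_n.+1).
Hypothesis bitS : bit_speciale Sigma z al th.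

Lemma ideal_term_of_bit_laws t :
  (forall A, bit_laws A (zval A z) al th ->
     forall a, eval A (ienv a (fun _ => zval A z)) t = zval A z) ->
  ideal_term Sigma z t.
Proof. by move=> Ht A HA; apply: Ht; exact: (bit_speciale_laws bitS HA). Qed.

Lemma compat_term_ideal tau i : ideal_term Sigma z (compat_term al th tau i).
Proof. by apply: ideal_term_of_bit_laws => A bitA a; exact: eval_compat_term_zero. Qed.

Lemma compat_term_at_ideal tau i j : ideal_term Sigma z (compat_term_at al th tau i j).
Proof. by apply: ideal_term_of_bit_laws => A bitA a; exact: eval_compat_term_at_zero. Qed.

Section Ideal.
Variables (A : algebra s) (HA : is_model Sigma A) (H : A -> Prop).
Hypothesis idH : is_ideal Sigma z A H.
Let bitA := bit_speciale_laws bitS HA.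

Lemma ideal_zero : H (zval A z).
Proof.
have [[h Hh] closedH] := idH.
have := closedH (const_term z) _ (fun _ => h) (fun _ => h) (fun _ => Hh).
by rewrite eval_const_term; apply=> B _ a; exact: eval_const_term.
Qed.

Lemma alpha_rel_zero_of_ideal x : H x -> alpha_rel al H x (zval A z).
Proof.
move=> Hx i.
have := idH.2 (app2 (al i) (Var (inr 0)) (const_term z)) _ (fun _ => x) (fun _ => x) (fun _ => Hx).
rewrite eval_app2 /= eval_const_term; apply.
apply: ideal_term_of_bit_laws => B bitB a.
by rewrite eval_app2 /= eval_const_term; exact: bitB.1.
Qed.

Lemma ideal_of_alpha_rel_zero x : alpha_rel al H x (zval A z) -> H x.
Proof.
move=> Hx.
pose b := ord_extend (fun l => eval A (env2 x (zval A z)) (al l)) (zval A z).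
pose t : term s (nat + nat) := app_theta th (fun l => Var (inr (val l))) (const_term z).
have := idH.2 t _ (fun _ => x) b (ord_extend_in ideal_zero Hx).
rewrite eval_app_theta /= eval_const_term.
rewrite (eval_theta_alpha bitA (x := x)) => [|l]; last by rewrite /b ord_extendE.
apply; apply: ideal_term_of_bit_laws => B bitB a.
by rewrite eval_app_theta /= eval_const_term (eval_theta_zero bitB).
Qed.

Lemma alpha_rel_trans x y w : alpha_rel al H x y -> alpha_rel al H y w -> alpha_rel al H x w.
Proof.
move=> Hxy Hyw i.
pose block (j : nat) : term s (nat + nat) -> term s (nat + nat) :=
  app_theta th (fun l => Var (inr (j * n + val l))).
(* theta(alpha(x, y), theta(alpha(y, w), w)) = theta(alpha(x, y), y) = x *)
pose t := app2 (al i) (block 0 (block 1 (Var (inl 0)))) (Var (inl 0)).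
pose F (j : 'I_2) l := eval A (env2 (env2 x y j) (env2 y w j)) (al l).
have HF j l : H (F j l) by rewrite /F /env2; case: ifP => _; [exact: Hxy | exact: Hyw].
have := idH.2 t _ (fun _ => w) (ord_extend2 F (zval A z)) (ord_extend2_in ideal_zero HF).
rewrite eval_app2 !eval_app_theta /=.
rewrite (eval_theta_alpha bitA (x := y) (y := w)) => [|l];
  last by rewrite (ord_extend2E F _ (ord_max : 'I_2)).
rewrite (eval_theta_alpha bitA (x := x) (y := y)) => [|l];
  last by rewrite (ord_extend2E F _ (ord0 : 'I_2)).
apply; apply: ideal_term_of_bit_laws => B bitB a.
by rewrite eval_app2 !eval_app_theta /= !(eval_theta_zero bitB) bitB.1.
Qed.

Lemma ideal_compatible f : compatible (alpha_rel al H) f.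
Proof.
apply: (compatible_of_compat_term bitA ideal_zero) => i a b.
by apply: idH.2; exact: compat_term_ideal.
Qed.

End Ideal.

Lemma is_ideal_of_alpha_rel (A : algebra s) (H : A -> Prop) :
  is_model Sigma A -> H (zval A z) ->
  (forall x, H x -> alpha_rel al H x (zval A z)) ->
  (forall x, alpha_rel al H x (zval A z) -> H x) ->
  (forall f, compatible (alpha_rel al H) f) ->
  is_ideal Sigma z A H.
Proof.
move=> HA H0 Hto Hof Hcomp; split; first by exists (zval A z).
move=> t Ht a b Hb; apply: Hof; rewrite -(Ht A HA a).
apply: eval_rel => // [x | k]; last exact: Hto.
exact: (alpha_rel_refl (bit_speciale_laws bitS HA) H0).
Qed.

End BitSpecialeIdeals.

Definition reduct (s : sig) (P : op s -> Prop) (A : algebra s) : algebra (subsig P) :=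
  @Algebra (subsig P) A (fun f => @interp s A (proj1_sig f)).

Section Reduct.
Variables (F' : sig) (P : op F' -> Prop).

Lemma eval_incl (A : algebra F') (X : Type) (v : X -> A) (t : term (subsig P) X) :
  eval A v (incl t) = eval (reduct P A) v t.
Proof.
elim: t => [x|f a IH] //=; f_equal.
by apply: functional_extensionality => i; exact: IH.
Qed.

Lemma zval_incl (A : algebra F') (z : term (subsig P) void) :
  zval A (incl z) = zval (reduct P A) z.
Proof. exact: eval_incl. Qed.

Lemma alpha_rel_incl (A : algebra F') n (alpha : 'I_n -> term (subsig P) 'I_2) (H : A -> Prop) x y :
  alpha_rel (fun i => incl (alpha i)) H x y <-> alpha_rel (A := reduct P A) alpha H x y.
Proof. by split=> Hxy i; move: (Hxy i); rewrite eval_incl. Qed.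

Lemma bit_laws_incl (A : algebra F') n z0 (alpha : 'I_n -> term (subsig P) 'I_2) theta :
  bit_laws (reduct P A) z0 alpha theta -> bit_laws A z0 (fun i => incl (alpha i)) (incl theta).
Proof.
case=> alpha0 thetaK; split=> [i x | x y]; first by rewrite eval_incl.
have -> : (fun l => eval A (env2 x y) (incl (alpha l))) =
          (fun l => eval (reduct P A) (env2 x y) (alpha l)).
  by apply: functional_extensionality => l; rewrite eval_incl.
by rewrite eval_incl; exact: thetaK.
Qed.

Variables (Sigma : identity (subsig P) -> Prop) (Sigma' : identity F' -> Prop).
Hypothesis HS : forall e, Sigma e -> Sigma' (incl e.1, incl e.2).

Lemma reduct_model (A : algebra F') : is_model Sigma' A -> is_model Sigma (reduct P A).
Proof. by move=> HA e He v; have := HA _ (HS He) v; rewrite !eval_incl. Qed.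

Lemma ideal_term_incl z t : ideal_term Sigma z t -> ideal_term Sigma' (incl z) (incl t).
Proof.
by move=> Ht A HA a; rewrite zval_incl eval_incl; exact: Ht (reduct_model HA) a.
Qed.

Lemma bit_speciale_incl n z (alpha : 'I_n -> term (subsig P) 'I_2) theta :
  bit_speciale Sigma z alpha theta ->
  bit_speciale Sigma' (incl z) (fun i => incl (alpha i)) (incl theta).
Proof.
case=> n_gt0 bitS; split=> // A HA; rewrite zval_incl.
exact: bit_laws_incl (bitS _ (reduct_model HA)).
Qed.

End Reduct.

Definition closed_under (s : sig) (A : algebra s) (T : term s (nat + nat) -> Prop)
    (H : A -> Prop) : Prop :=
  forall t, T t -> forall a b : nat -> A, (forall k, H (b k)) -> H (eval A (ienv a b) t).

Section Extension.
Variables (F' : sig) (P : op F' -> Prop).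
Variables (Sigma : identity (subsig P) -> Prop) (Sigma' : identity F' -> Prop).
Variables (n : nat) (z : term (subsig P) void).
Variables (alpha : 'I_n -> term (subsig P) 'I_2) (theta : term (subsig P) 'I_n.+1).
Variable T : term (subsig P) (nat + nat) -> Prop.
Hypothesis HS : forall e, Sigma e -> Sigma' (incl e.1, incl e.2).
Hypothesis bitS : bit_speciale Sigma z alpha theta.
Hypothesis detT : determines_ideals Sigma z T.

Lemma determines_ideals_expansion (T' : term F' (nat + nat) -> Prop) :
  (forall t, T t -> T' (incl t)) ->
  (forall t, T' t -> ideal_term Sigma' (incl z) t) ->
  (forall A, is_model Sigma' A -> forall H, is_ideal Sigma z (reduct P A) H ->
     closed_under T' H ->
     forall f, ~ P f -> compatible (alpha_rel (fun i => incl (alpha i)) H) f) ->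
  determines_ideals Sigma' (incl z) T'.
Proof.
move=> TT' T'ideal newC; split=> // A HA H Hne; split=> [[_ closedH] t /T'ideal | closedH].
  exact: closedH.
have idH : is_ideal Sigma z (reduct P A) H.
  apply/(detT.2 _ (reduct_model HS HA) H Hne) => t Tt a b Hb.
  by rewrite -eval_incl; exact: closedH (TT' _ Tt) a b Hb.
apply: (is_ideal_of_alpha_rel (bit_speciale_incl HS bitS) HA); rewrite ?zval_incl.
- exact: ideal_zero idH.
- by move=> x Hx; apply/alpha_rel_incl; exact: (alpha_rel_zero_of_ideal bitS idH Hx).
- by move=> x /alpha_rel_incl; exact: (ideal_of_alpha_rel_zero bitS (reduct_model HS HA) idH).
move=> f; case: (classic (P f)) => [Pf | nPf]; last exact: newC.
move=> u v Huv; apply/alpha_rel_incl.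
apply: (ideal_compatible bitS (reduct_model HS HA) idH (f := exist P f Pf)) => j.
exact/alpha_rel_incl.
Qed.

Lemma union_a_ideal t : union_a alpha theta T t -> ideal_term Sigma' (incl z) t.
Proof.
case=> [[t0 [Tt0 ->]] | [tau [i [_ ->]]]]; first exact: (ideal_term_incl HS (detT.1 _ Tt0)).
exact: (compat_term_ideal (bit_speciale_incl HS bitS)).
Qed.

Lemma union_b_ideal t : union_b alpha theta T t -> ideal_term Sigma' (incl z) t.
Proof.
case=> [[t0 [Tt0 ->]] | [tau [i [j [_ ->]]]]]; first exact: (ideal_term_incl HS (detT.1 _ Tt0)).
exact: (compat_term_at_ideal (bit_speciale_incl HS bitS)).
Qed.

Lemma union_a_compatible (A : algebra F') :
  is_model Sigma' A -> forall H : A -> Prop, is_ideal Sigma z (reduct P A) H ->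
  closed_under (union_a alpha theta T) H ->
  forall f, ~ P f -> compatible (alpha_rel (fun i => incl (alpha i)) H) f.
Proof.
move=> HA H idH closedH f nPf.
apply: (compatible_of_compat_term (bit_speciale_laws (bit_speciale_incl HS bitS) HA)).
  by rewrite zval_incl; exact: (ideal_zero idH).
by move=> i a b; apply: closedH; right; exists f, i.
Qed.

Lemma union_b_compatible (A : algebra F') :
  is_model Sigma' A -> forall H : A -> Prop, is_ideal Sigma z (reduct P A) H ->
  closed_under (union_b alpha theta T) H ->
  forall f, ~ P f -> compatible (alpha_rel (fun i => incl (alpha i)) H) f.
Proof.
move=> HA H idH closedH f nPf.
apply: (compatible_of_compat_term_at (bit_speciale_laws (bit_speciale_incl HS bitS) HA)).
- by rewrite zval_incl; exact: (ideal_zero idH).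
- move=> x y w /alpha_rel_incl Hxy /alpha_rel_incl Hyw; apply/alpha_rel_incl.
  exact: (alpha_rel_trans bitS (reduct_model HS HA) idH Hxy Hyw).
- by move=> i j a b; apply: closedH; right; exists f, i, j.
Qed.

End Extension.

Theorem corollary2p9 (F' : sig) (P : op F' -> Prop)
    (Sigma : identity (subsig P) -> Prop) (Sigma' : identity F' -> Prop)
    (n : nat) (z : term (subsig P) void)
    (alpha : 'I_n -> term (subsig P) 'I_2) (theta : term (subsig P) 'I_n.+1)
    (T : term (subsig P) (nat + nat) -> Prop) :
  (forall e, Sigma e -> Sigma' (incl e.1, incl e.2)) ->
  bit_speciale Sigma z alpha theta ->
  determines_ideals Sigma z T ->
  determines_ideals Sigma' (incl z) (union_a alpha theta T) /\
  determines_ideals Sigma' (incl z) (union_b alpha theta T).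
Proof.
move=> HS bitS detT.
split; apply: (determines_ideals_expansion HS bitS detT).
- by move=> t Tt; left; exists t.
- exact: (union_a_ideal HS bitS detT).
- exact: (union_a_compatible HS bitS).
- by move=> t Tt; left; exists t.
- exact: (union_b_ideal HS bitS detT).
- exact: (union_b_compatible HS bitS).
Qed.
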